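(* Let $Q^3=\mathbb{P}(\omega^o)\cap Q^4$ and let $L$ be a circle in $S^3\subset Q^3$. Then there is a unique pair $\{[\lambda],[\lambda j]\}\subset Q^3\setminus S^3$ such that the two-sphere in $S^4$ associated to $\{[\lambda],[\lambda j]\}$ contains $L$. The set of oriented circles (and points) in $S^3$ is thus parametrized by the three-dimensional complex quadric $Q^3$.
   Context: $\mathbb{H}$ denotes the quaternions, $\mathbb{H}=\mathbb{C}\oplus j\mathbb{C}$; $\mathbb{H}^2$ is a right $\mathbb{H}$-vector space identified with $\mathbb{C}^4$; $\mathbb{HP}^1\cong S^4$. $Q^4=\{[\alpha]\in\mathbb{P}(\Lambda^2\mathbb{C}^4):\alpha\wedge\alpha=0\}$, with $[v\wedge w]$ identified with the line of $\mathbb{P}(\mathbb{C}^4)$ through $[v],[w]$. The antilinear extension of $v\wedge w\mapsto vj\wedge wj$ gives an involution $\alpha\mapsto\alpha j$ of $Q^4$ whose fixed points $[x\wedge xj]$ are identified with the points $x\mathbb{H}$ of $S^4$; for a non-fixed point $[\lambda]$, $[\lambda]$ and $[\lambda j]$ are the twistor lifts of one round two-sphere of $S^4$ with its two conformal structures. Fix an $\mathbb{H}$-basis $e_1,e_2$ and $\mathfrak{h}(e_1a+e_2b,e_1c+e_2d)=\bar a d+\bar b c$; write $\mathfrak{h}=h+j\omega$ with $h$ hermitian and $\omega$ alternating complex bilinear on $\mathbb{C}^4$ (viewed as a linear functional on $\Lambda^2\mathbb{C}^4$), and $\omega^o=\ker\omega\subset\Lambda^2\mathbb{C}^4$. $S^3=\{x\mathbb{H}:\mathfrak{h}(x,x)=0\}$,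 identified with the set $\{[x\wedge xj]:x\mathbb{H}\in S^3\}\subset Q^3$. A circle in $S^4$ is the image under a Möbius transformation of a real affine line in an affine chart. *)

From HB Require Import structures.
From mathcomp Require Import all_boot all_order all_algebra.
From mathcomp Require Import complex.
From mathcomp Require Import reals.
Set Implicit Arguments. Unset Strict Implicit. Unset Printing Implicit Defensive.
Import Order.TTheory GRing.Theory Num.Theory.
Local Open Scope ring_scope.

Section Quaternionic.
Variable R : rcfType.
Local Notation C := R[i].

(** Quaternions H = C (+) jC : the pair (a, b) stands for a + j b,
    with the rule  j z = conj(z) j,  j^2 = -1. *)
Definition quat := (C * C)%type.
Definition qmk (a b : C) : quat := (a, b).
Definition q0 : quat := (0, 0).
Definition q1 : quat := (1, 0).
Definition qj : quat := (0, 1).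
Definition qadd (p q : quat) : quat := (p.1 + q.1, p.2 + q.2).
(* (a + jb)(c + jd) = (ac - conj(b) d) + j (conj(a) d + b c) *)
Definition qmul (p q : quat) : quat :=
  (p.1 * q.1 - conjc p.2 * q.2, conjc p.1 * q.2 + p.2 * q.1).
Definition qconj (p : quat) : quat := (conjc p.1, - p.2).
Definition qreal (t : R) : quat := ((t%:C)%C, 0).

(** H^2 (right H-vector space with H-basis e1, e2) identified with C^4:
    x = e1 (a1 + j b1) + e2 (a2 + j b2)  <->  (a1, b1, a2, b2). *)
Definition i0 : 'I_4 := @Ordinal 4 0 isT.
Definition i1 : 'I_4 := @Ordinal 4 1 isT.
Definition i2 : 'I_4 := @Ordinal 4 2 isT.
Definition i3 : 'I_4 := @Ordinal 4 3 isT.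

Definition comp1 (x : 'rV[C]_4) : quat := (x 0 i0, x 0 i1).
Definition comp2 (x : 'rV[C]_4) : quat := (x 0 i2, x 0 i3).
Definition mkH2 (p q : quat) : 'rV[C]_4 :=
  \row_(k < 4) match val k with
               | 0 => p.1 | 1 => p.2 | 2 => q.1 | _ => q.2 end.

Definition rmulH (x : 'rV[C]_4) (q : quat) : 'rV[C]_4 :=
  mkH2 (qmul (comp1 x) q) (qmul (comp2 x) q).
Definition jmap (x : 'rV[C]_4) : 'rV[C]_4 := rmulH x qj.

Definition hform (x y : 'rV[C]_4) : quat :=
  qadd (qmul (qconj (comp1 x)) (comp2 y)) (qmul (qconj (comp2 x)) (comp1 y)).
(* hform = h + j omega *)
Definition hC (x y : 'rV[C]_4) : C := (hform x y).1.
Definition omega (x y : 'rV[C]_4) : C := (hform x y).2.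

(** Points of S^4 = HP^1 are quaternionic lines xH, x <> 0.
    [samept x y] : y is a nonzero vector representing the point xH. *)
Definition samept (x y : 'rV[C]_4) : Prop :=
  x != 0 /\ exists q : quat, q != q0 /\ y = rmulH x q.

Definition inS3pt (x : 'rV[C]_4) : Prop := x != 0 /\ hform x x = q0.

(** Moebius transformations: induced by invertible quaternionic 2x2 matrices
    [a b; c d] acting on the left of H^2 (commuting with right scalars). *)
Definition mob (a b c d : quat) (x : 'rV[C]_4) : 'rV[C]_4 :=
  mkH2 (qadd (qmul a (comp1 x)) (qmul b (comp2 x)))
       (qadd (qmul c (comp1 x)) (qmul d (comp2 x))).
Definition mob_invertible (a b c d : quat) : Prop :=
  exists a' b' c' d' : quat,
    (forall x, mob a' b' c' d' (mob a b c d x) = x) /\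
    (forall x, mob a b c d (mob a' b' c' d' x) = x).

(** Circle: image under the Moebius map [a b; c d] of the real affine line
    {p + t u : t in R} (u <> 0) in the affine chart q |-> (e1 q + e2)H,
    together with its point at infinity e1 H.
    [oncircle .. x] : the nonzero vector x represents a point of the circle. *)
Definition oncircle (a b c d p u : quat) (x : 'rV[C]_4) : Prop :=
  samept (mob a b c d (mkH2 q1 q0)) x \/
  exists t : R, samept (mob a b c d (mkH2 (qadd p (qmul (qreal t) u)) q1)) x.

(** Points of Q^4 = projective lines of P(C^4), i.e. complex 2-planes,
    given as the row space of a rank-2 matrix W (W represents [v /\ w] for its
    rows v, w); two such represent the same point iff (W == W')%MS. *)
Definition inQ4 (W : 'M[C]_(2, 4)) : Prop := \rank W = 2%N.
Definition jspan (W : 'M[C]_(2, 4)) : 'M[C]_(2, 4) :=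
  col_mx (jmap (row 0 W)) (jmap (row 1 W)).
(* Q^3 = P(omega^o) cap Q^4 : omega(v /\ w) = omega(v, w) = 0 *)
Definition inQ3 (W : 'M[C]_(2, 4)) : Prop :=
  inQ4 W /\ omega (row 0 W) (row 1 W) = 0.
(* the points of S^3 inside Q^3 : [x /\ xj] with xH in S^3 *)
Definition isS3inQ3 (W : 'M[C]_(2, 4)) : Prop :=
  exists x : 'rV[C]_4, inS3pt x /\ (W == col_mx x (jmap x))%MS.
Definition inQ3mS3 (W : 'M[C]_(2, 4)) : Prop := inQ3 W /\ ~ isS3inQ3 W.

(** The two-sphere of S^4 associated to {[lambda], [lambda j]} (lambda = W not
    j-fixed): its twistor projection { vH : v in W, v <> 0 }. *)
Definition onsphere (W : 'M[C]_(2, 4)) (x : 'rV[C]_4) : Prop :=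
  exists v : 'rV[C]_4, v != 0 /\ (v <= W)%MS /\ samept v x.

End Quaternionic.

From HB Require Import structures.
From mathcomp Require Import all_boot all_order all_algebra.
From mathcomp Require Import complex.
From mathcomp Require Import reals.
From mathcomp Require Import ring.
Import Order.TTheory GRing.Theory Num.Theory.
Local Open Scope ring_scope.
Set Implicit Arguments. Unset Strict Implicit. Unset Printing Implicit Defensive.

(* Up to the Moebius map, the circle is { (w0 + t w1) H : t real } together with
   w1 H, for an H-basis (w0, w1) of H^2.  Since h vanishes on w0, w1 and w0 + w1,
   the quaternion k = h(w0, w1) is pure, and it is nonzero because h is
   nondegenerate.  A complex plane W lifts a two-sphere through the circle iff
   W = span_C(w0 g, w1 g) for some g in H^*; then omega(W) is the j-part of
   conj(g) k g.  Conjugating k to a complex number, conj(q) k q = z with z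
   imaginary, and writing g = q r, this j-part is -2 z r.1 r.2, so W lies in Q^3
   iff r is in C or in jC, i.e. iff W = span_C(w0 q, w1 q) or W is its image
   under the involution.  Such a W is never a point of S^3, because it contains
   two H-independent vectors. *)

Section QuatOps.
Variable R : rcfType.
Local Notation C := R[i].
Local Notation quat := (quat R).

Lemma conjcD (x y : C) : (x + y)^*%C = x^*%C + y^*%C. Proof. exact: rmorphD. Qed.
Lemma conjcM (x y : C) : (x * y)^*%C = x^*%C * y^*%C. Proof. exact: rmorphM. Qed.
Lemma conjcN (x : C) : (- x)^*%C = - x^*%C. Proof. exact: rmorphN. Qed.
Lemma conjcB (x y : C) : (x - y)^*%C = x^*%C - y^*%C. Proof. exact: rmorphB. Qed.

Definition qneg (p : quat) : quat := (- p.1, - p.2).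
Definition qc (z : C) : quat := (z, 0).
Definition qnorm (p : quat) : C := p.1 * p.1^*%C + p.2 * p.2^*%C.
Definition qinv (p : quat) : quat := (p.1^*%C / qnorm p, - p.2 / qnorm p).
Definition qpure (k : quat) : Prop := k.1 + k.1^*%C = 0.
Definition qcongr (k g : quat) : quat := qmul (qconj g) (qmul k g).

End QuatOps.

Ltac qunfold := rewrite /qmul /qadd /qconj /qreal /q1 /q0 /qj /qneg /qc; cbn [fst snd].
Ltac cring :=
  rewrite ?(conjcD, conjcN, conjcB, conjcM, conjcK, conjc0, conjc1, conjc_real); ring.
(* Section variables survive [destruct], so only the quaternion variables
   occurring in the goal are split. *)
Ltac quat_ring :=
  repeat match goal with |- context [?q] =>
    is_var q; lazymatch type of q with quat _ => destruct q end end;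
  qunfold; try congr (_, _); cring.

Section Quaternions.
Variable R : rcfType.
Local Notation C := R[i].
Local Notation quat := (quat R).
Local Notation q0 := (q0 R).
Local Notation q1 := (q1 R).
Local Notation qj := (qj R).

Lemma qmulA (p q r : quat) : qmul (qmul p q) r = qmul p (qmul q r).
Proof. quat_ring. Qed.
Lemma qadd0q (p : quat) : qadd q0 p = p.
Proof. quat_ring. Qed.
Lemma qaddKN (p q : quat) : qadd p (qadd q (qneg p)) = q.
Proof. quat_ring. Qed.
Lemma qconjK (p : quat) : qconj (qconj p) = p.
Proof. quat_ring. Qed.
Lemma qmul1q (p : quat) : qmul q1 p = p.
Proof. quat_ring. Qed.
Lemma qmulq0 (p : quat) : qmul p q0 = q0.
Proof. quat_ring. Qed.
Lemma qmul0q (p : quat) : qmul q0 p = q0.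
Proof. quat_ring. Qed.
Lemma qcM (x y : C) : qmul (qc x) (qc y) = qc (x * y).
Proof. quat_ring. Qed.
Lemma qjc (z : C) : qmul qj (qc z) = (0, z).
Proof. quat_ring. Qed.
Lemma qconjMq (q : quat) : qmul (qconj q) q = qc (qnorm q).
Proof. rewrite /qnorm; quat_ring. Qed.
Lemma qcongrM (k q r : quat) : qcongr k (qmul q r) = qcongr (qcongr k q) r.
Proof. rewrite /qcongr; quat_ring. Qed.

Lemma qcongr_imag_snd (r : quat) (z : C) : z^*%C = - z ->
  (qcongr (qc z) r).2 = - (2%:R * z * (r.1 * r.2)).
Proof. by case: r => r1 r2 hz; rewrite /qcongr; qunfold; rewrite hz; cring. Qed.

Lemma qsub_eq0 (p q : quat) : qadd p (qneg q) = q0 -> p = q.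
Proof. by case: p q => [p1 p2] [q1 q2]; qunfold => -[/subr0_eq -> /subr0_eq ->]. Qed.

Lemma qneg_eq0 (p : quat) : qneg p = q0 -> p = q0.
Proof. by case: p => x y; qunfold => -[/eqP + /eqP]; rewrite !oppr_eq0 => /eqP -> /eqP ->. Qed.

Lemma qnorm_eq0 (p : quat) : qnorm p = 0 -> p = q0.
Proof.
case: p => [x y]; rewrite /qnorm /= => /eqP; rewrite paddr_eq0 ?mulcJ_ge0 //.
by rewrite !mulf_eq0 !conjc_eq0 !orbb => /andP[/eqP -> /eqP ->].
Qed.

Lemma qnorm_neq0 (p : quat) : p != q0 -> qnorm p != 0.
Proof. by apply: contra_neq => /qnorm_eq0. Qed.

Lemma qnorm_ge0 (p : quat) : 0 <= qnorm p.
Proof. by rewrite addr_ge0 ?mulcJ_ge0. Qed.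

Lemma conjc_qnorm (p : quat) : (qnorm p)^*%C = qnorm p.
Proof. rewrite /qnorm; cring. Qed.

Lemma qmulV (p : quat) : p != q0 -> qmul p (qinv p) = q1.
Proof.
move=> /qnorm_neq0; rewrite /qinv /qmul /q1; case: p => [x y].
rewrite /qnorm /= => hn; congr (_, _); rewrite ?(conjcD, conjcM, conjcN, conjcK); field; exact: hn.
Qed.

Lemma qmulVq (p : quat) : p != q0 -> qmul (qinv p) p = q1.
Proof.
move=> hp; have hn := qnorm_neq0 hp; have hr := conjc_qnorm p.
move: hn hr; rewrite /qinv /qmul /q1; case: p {hp} => [x y] /=; rewrite /qnorm /= => hn hr.
rewrite !conjcM conjc_inv hr; congr (_, _); rewrite ?(conjcN, conjcK); field; exact: hn.
Qed.

Lemma qmul_neq0 (p q : quat) : p != q0 -> q != q0 -> qmul p q != q0.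
Proof.
move=> hp; apply: contra_neq => hpq.
by rewrite -(qmul1q q) -(qmulVq hp) qmulA hpq qmulq0.
Qed.

Lemma qmul_eq0r (p q : quat) : p != q0 -> qmul p q = q0 -> q = q0.
Proof. by move=> hp /eqP; apply: contraTeq; exact: qmul_neq0. Qed.

Lemma qinv_neq0 (p : quat) : p != q0 -> qinv p != q0.
Proof.
move=> hp; apply/eqP => h; have := qmulV hp; rewrite h qmulq0 => -[/eqP].
by rewrite eq_sym oner_eq0.
Qed.

Lemma qmulKV (u g : quat) : u != q0 -> qmul u (qmul (qinv u) g) = g.
Proof. by move=> hu; rewrite -qmulA qmulV // qmul1q. Qed.

Lemma q1_neq0 : q1 != q0.
Proof. by apply/eqP => -[/eqP]; rewrite oner_eq0. Qed.
Lemma qj_neq0 : qj != q0.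
Proof. by apply/eqP => -[/eqP]; rewrite oner_eq0. Qed.

Lemma conjc_i : ('i%C : C)^*%C = - 'i%C.
Proof. by apply/eqP; rewrite eq_complex /= oppr0 !eqxx. Qed.
Lemma i_neq0 : ('i%C : C) != 0.
Proof. by apply/eqP => /eqP; rewrite eq_complex /= oner_eq0 andbF. Qed.

End Quaternions.

Section Components.
Variable R : rcfType.
Local Notation C := R[i].
Local Notation quat := (quat R).
Local Notation vec := 'rV[C]_4.

Lemma comp1_mkH2 (p q : quat) : comp1 (mkH2 p q) = p.
Proof. by rewrite /comp1 /mkH2 !mxE; case: p. Qed.
Lemma comp2_mkH2 (p q : quat) : comp2 (mkH2 p q) = q.
Proof. by rewrite /comp2 /mkH2 !mxE; case: q. Qed.
Lemma mkH2_comp (x : vec) : mkH2 (comp1 x) (comp2 x) = x.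
Proof.
apply/rowP => k; rewrite /mkH2 /comp1 /comp2 !mxE.
by case: k => [[|[|[|[|n]]]] Hk] //=; congr (x 0 _); apply: val_inj.
Qed.
Lemma vecP (x y : vec) : comp1 x = comp1 y -> comp2 x = comp2 y -> x = y.
Proof. by move=> h1 h2; rewrite -(mkH2_comp x) -(mkH2_comp y) h1 h2. Qed.

Lemma comp1D (x y : vec) : comp1 (x + y) = qadd (comp1 x) (comp1 y).
Proof. by rewrite /comp1 !mxE. Qed.
Lemma comp2D (x y : vec) : comp2 (x + y) = qadd (comp2 x) (comp2 y).
Proof. by rewrite /comp2 !mxE. Qed.
Lemma comp1Z (z : C) (x : vec) : comp1 (z *: x) = qmul (comp1 x) (qc z).
Proof. rewrite /comp1 /qmul /qc !mxE /=; congr (_, _); ring. Qed.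
Lemma comp2Z (z : C) (x : vec) : comp2 (z *: x) = qmul (comp2 x) (qc z).
Proof. rewrite /comp2 /qmul /qc !mxE /=; congr (_, _); ring. Qed.
Lemma comp10 : comp1 (0 : vec) = q0 R. Proof. by rewrite /comp1 !mxE. Qed.
Lemma comp20 : comp2 (0 : vec) = q0 R. Proof. by rewrite /comp2 !mxE. Qed.
Lemma comp1N (x : vec) : comp1 (- x) = qneg (comp1 x). Proof. by rewrite /comp1 !mxE. Qed.
Lemma comp2N (x : vec) : comp2 (- x) = qneg (comp2 x). Proof. by rewrite /comp2 !mxE. Qed.
Lemma comp1_rmulH (x : vec) q : comp1 (rmulH x q) = qmul (comp1 x) q.
Proof. exact: comp1_mkH2. Qed.
Lemma comp2_rmulH (x : vec) q : comp2 (rmulH x q) = qmul (comp2 x) q.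
Proof. exact: comp2_mkH2. Qed.
Lemma comp1_jmap (x : vec) : comp1 (jmap x) = qmul (comp1 x) (qj R).
Proof. exact: comp1_rmulH. Qed.
Lemma comp2_jmap (x : vec) : comp2 (jmap x) = qmul (comp2 x) (qj R).
Proof. exact: comp2_rmulH. Qed.
Lemma comp1_mob a b c d (x : vec) :
  comp1 (mob a b c d x) = qadd (qmul a (comp1 x)) (qmul b (comp2 x)).
Proof. exact: comp1_mkH2. Qed.
Lemma comp2_mob a b c d (x : vec) :
  comp2 (mob a b c d x) = qadd (qmul c (comp1 x)) (qmul d (comp2 x)).
Proof. exact: comp2_mkH2. Qed.

Definition compE := (comp1_mkH2, comp2_mkH2, comp1D, comp2D, comp1Z, comp2Z,
  comp10, comp20, comp1N, comp2N, comp1_rmulH, comp2_rmulH, comp1_jmap, comp2_jmap,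
  comp1_mob, comp2_mob).

End Components.

Ltac coords_ring :=
  rewrite ?compE;
  repeat match goal with
  | |- context [comp1 ?x] => generalize (comp1 x); intros ?
  | |- context [comp2 ?x] => generalize (comp2 x); intros ? end;
  quat_ring.
Ltac vec_ring := apply: vecP; coords_ring.

Section RightModule.
Variable R : rcfType.
Local Notation C := R[i].
Local Notation vec := 'rV[C]_4.
Local Notation q0 := (q0 R).
Local Notation q1 := (q1 R).
Local Notation qj := (qj R).

Lemma rmulHA (x : vec) p q : rmulH (rmulH x p) q = rmulH x (qmul p q).
Proof. vec_ring. Qed.
Lemma rmulH1 (x : vec) : rmulH x q1 = x.
Proof. vec_ring. Qed.
Lemma rmulH0 (x : vec) : rmulH x q0 = 0.
Proof. vec_ring. Qed.
Lemma rmul0H q : rmulH (0 : vec) q = 0.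
Proof. vec_ring. Qed.
Lemma rmulHDl (x y : vec) q : rmulH (x + y) q = rmulH x q + rmulH y q.
Proof. vec_ring. Qed.
Lemma rmulHDr (x : vec) p q : rmulH x (qadd p q) = rmulH x p + rmulH x q.
Proof. vec_ring. Qed.
Lemma rmulHN (x : vec) q : rmulH x (qneg q) = - rmulH x q.
Proof. vec_ring. Qed.
Lemma scaler_rmulH (x : vec) z q : z *: rmulH x q = rmulH x (qmul q (qc z)).
Proof. vec_ring. Qed.
Lemma scalerH (x : vec) z : z *: x = rmulH x (qc z).
Proof. vec_ring. Qed.
Lemma jmap_rmulH (x : vec) q : jmap (rmulH x q) = rmulH x (qmul q qj).
Proof. vec_ring. Qed.
Lemma scale_jmapD (x : vec) a b : a *: x + b *: jmap x = rmulH x (a, b).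
Proof. vec_ring. Qed.
Lemma mob_rmulH a b c d (x : vec) q : mob a b c d (rmulH x q) = rmulH (mob a b c d x) q.
Proof. vec_ring. Qed.
Lemma mobD a b c d (x y : vec) : mob a b c d (x + y) = mob a b c d x + mob a b c d y.
Proof. vec_ring. Qed.
Lemma mob0 a b c d : mob a b c d (0 : vec) = 0.
Proof. vec_ring. Qed.

Lemma rmulH_eq0 (x : vec) q : q != q0 -> (rmulH x q == 0) = (x == 0).
Proof.
move=> hq; apply/eqP/eqP => [h|->]; last exact: rmul0H.
by rewrite -(rmulH1 x) -(qmulV hq) -rmulHA h rmul0H.
Qed.

Lemma samept_refl (x : vec) : x != 0 -> samept x x.
Proof. by move=> hx; split=> //; exists q1; rewrite rmulH1; split=> //; exact: q1_neq0. Qed.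

Lemma samept_rmulH (y x : vec) q :
  q != q0 -> samept (rmulH y q) x <-> samept y x.
Proof.
move=> hq; rewrite /samept rmulH_eq0 //; split=> -[hy [r [hr ->]]]; split=> //.
  by exists (qmul q r); rewrite rmulHA qmul_neq0.
exists (qmul (qinv q) r); rewrite rmulHA qmulKV //; split=> //.
by rewrite qmul_neq0 ?qinv_neq0.
Qed.

Lemma onsphereP (W : 'M[C]_(2, 4)) (x : vec) :
  onsphere W x <-> x != 0 /\ exists2 g, g != q0 & (rmulH x g <= W)%MS.
Proof.
split=> [[v [hv [hvW [_ [h [hh ->]]]]]] | [hx [g hg hxW]]].
  split; first by rewrite rmulH_eq0.
  by exists (qinv h); rewrite ?qinv_neq0 // rmulHA qmulV // rmulH1.
exists (rmulH x g); rewrite rmulH_eq0 //; split=> //; split=> //.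
by apply/samept_rmulH => //; exact: samept_refl.
Qed.

End RightModule.

Section HermitianForm.
Variable R : rcfType.
Local Notation C := R[i].
Local Notation vec := 'rV[C]_4.
Local Notation q0 := (q0 R).
Local Notation q1 := (q1 R).

Lemma hform_rmulH (x y : vec) p q :
  hform (rmulH x p) (rmulH y q) = qmul (qconj p) (qmul (hform x y) q).
Proof. rewrite /hform; coords_ring. Qed.
Lemma hformDl (x y v : vec) : hform (x + y) v = qadd (hform x v) (hform y v).
Proof. rewrite /hform; coords_ring. Qed.
Lemma hformDr (x y v : vec) : hform v (x + y) = qadd (hform v x) (hform v y).
Proof. rewrite /hform; coords_ring. Qed.
Lemma hformC (x y : vec) : hform y x = qconj (hform x y).
Proof. rewrite /hform; coords_ring. Qed.
Lemma hform_rmulHr (x y : vec) q : hform x (rmulH y q) = qmul (hform x y) q.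
Proof. rewrite /hform; coords_ring. Qed.
Lemma hform_e1 (x : vec) : hform x (mkH2 q1 q0) = qconj (comp2 x).
Proof. rewrite /hform; coords_ring. Qed.
Lemma hform_e2 (x : vec) : hform x (mkH2 q0 q1) = qconj (comp1 x).
Proof. rewrite /hform; coords_ring. Qed.

Lemma hform_nondegenerate (x : vec) : (forall y, hform x y = q0) -> x = 0.
Proof.
move=> hx; apply: vecP; rewrite ?comp10 ?comp20.
  by rewrite -[comp1 x]qconjK -hform_e2 hx; quat_ring.
by rewrite -[comp2 x]qconjK -hform_e1 hx; quat_ring.
Qed.

Lemma hform_isotropic_pure (x y : vec) :
  hform x x = q0 -> hform y y = q0 -> hform (x + y) (x + y) = q0 -> qpure (hform x y).
Proof.
rewrite hformDl !hformDr (hformC x y) => -> ->.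
by rewrite /qpure; case: (hform x y) => k1 k2; qunfold => -[<- _]; ring.
Qed.

Lemma omegaDZl (x y v : vec) a b :
  omega (a *: x + b *: y) v = a * omega x v + b * omega y v.
Proof. rewrite /omega /hform; coords_ring. Qed.
Lemma omegaDZr (x y v : vec) a b :
  omega v (a *: x + b *: y) = a * omega v x + b * omega v y.
Proof. rewrite /omega /hform; coords_ring. Qed.
Lemma omega_alt (x : vec) : omega x x = 0.
Proof. rewrite /omega /hform; coords_ring. Qed.
Lemma omegaC (x y : vec) : omega y x = - omega x y.
Proof. rewrite /omega /hform; coords_ring. Qed.

End HermitianForm.

Section Planes.
Variable R : rcfType.
Local Notation C := R[i].
Local Notation vec := 'rV[C]_4.

Definition col2 (x y : vec) : 'M[C]_(2, 4) := col_mx x y.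

Lemma row0_col2 (x y : vec) : row 0 (col2 x y) = x.
Proof.
apply/rowP => j; rewrite mxE (_ : (0 : 'I_2) = lshift 1 (0 : 'I_1)); last exact: val_inj.
exact: col_mxEu.
Qed.
Lemma row1_col2 (x y : vec) : row 1 (col2 x y) = y.
Proof.
apply/rowP => j; rewrite mxE (_ : (1 : 'I_2) = rshift 1 (0 : 'I_1)); last exact: val_inj.
exact: col_mxEd.
Qed.

Lemma mul_row2 (c : 'rV[C]_2) (W : 'M[C]_(2, 4)) :
  c *m W = c 0 0 *: row 0 W + c 0 1 *: row 1 W.
Proof.
rewrite mulmx_sum_row !big_ord_recl big_ord0 addr0.
by congr (c 0 _ *: row _ W + c 0 _ *: row _ W); apply: val_inj.
Qed.

Lemma submx_row2P (v : vec) (W : 'M[C]_(2, 4)) :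
  reflect (exists a b, v = a *: row 0 W + b *: row 1 W) (v <= W)%MS.
Proof.
apply: (iffP submxP) => [[c ->] | [a [b ->]]]; first by exists (c 0 0), (c 0 1); rewrite mul_row2.
by exists (\row_(j < 2) if val j == 0%N then a else b); rewrite mul_row2 !mxE.
Qed.

Lemma submx_col2P (v x y : vec) :
  reflect (exists a b, v = a *: x + b *: y) (v <= col2 x y)%MS.
Proof.
by apply: (iffP (submx_row2P _ _)); rewrite row0_col2 row1_col2.
Qed.

Lemma scale_sub_col2l (x y : vec) a : (a *: x <= col2 x y)%MS.
Proof. by apply/submx_col2P; exists a, 0; rewrite scale0r addr0. Qed.
Lemma scale_sub_col2r (x y : vec) b : (b *: y <= col2 x y)%MS.
Proof. by apply/submx_col2P; exists 0, b; rewrite scale0r add0r. Qed.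

Lemma col2_sub (x y : vec) (W : 'M[C]_(2, 4)) :
  (x <= W)%MS -> (y <= W)%MS -> (col2 x y <= W)%MS.
Proof. by move=> hx hy; have := col_mx_sub x y W; rewrite hx hy. Qed.

Lemma rank_col2 (x y : vec) :
  (forall a b, a *: x + b *: y = 0 -> a = 0 /\ b = 0) -> \rank (col2 x y) = 2%N.
Proof.
move=> free; apply/eqP; rewrite -[_ == _]kermx_eq0; apply/eqP/row_matrixP => i.
rewrite row0; have := congr1 (row i) (mulmx_ker (col2 x y)).
rewrite row_mul row0 mul_row2 row0_col2 row1_col2 => /free[h0 h1].
apply/rowP => j; rewrite [RHS]mxE.
by case: j => [[|[|//]] Hj]; [rewrite -h0 | rewrite -h1]; congr (_ _ _); apply: val_inj.
Qed.

Lemma eqmx_rank2 (X Y : 'M[C]_(2, 4)) :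
  (X <= Y)%MS -> \rank X = 2%N -> \rank Y = 2%N -> (X == Y)%MS.
Proof. by move=> sXY hX hY; rewrite -(mxrank_leqif_eq sXY).2 hX hY. Qed.

Lemma omega_Q3 (W : 'M[C]_(2, 4)) (x y : vec) :
  inQ3 W -> (x <= W)%MS -> (y <= W)%MS -> omega x y = 0.
Proof.
move=> [_ hW] /submx_row2P[a [b ->]] /submx_row2P[a' [b' ->]].
by rewrite omegaDZl !omegaDZr !omega_alt (omegaC (row 0 W)) hW; ring.
Qed.

End Planes.

Section PureQuaternions.
Variable R : rcfType.
Local Notation C := R[i].
Local Notation quat := (quat R).
Local Notation q0 := (q0 R).
Local Notation qj := (qj R).

(* A pure quaternion [k] satisfies [k^2 = - |k|^2 = (n i)^2], hence
   [k (k + n i) = (k + n i) (n i)]; when [k + n i = 0] the quaternion [j]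
   does the job instead. *)
Lemma pure_quat_eigen (k : quat) (n : C) :
  qpure k -> n * n = qnorm k -> n^*%C = n ->
  exists2 q, q != q0 & qmul k q = qmul q (qc (n * 'i%C)).
Proof.
case: k => k1 k2; rewrite /qpure /= => hk hn nJ.
have k1J : k1^*%C = - k1 by apply/eqP; rewrite -addr_eq0 addrC hk.
have ii : ('i%C : C) * 'i%C = -1 by rewrite -expr2 sqr_i.
have [h | h] := eqVneq (qadd (k1, k2) (qc (n * 'i%C))) q0.
  exists qj; first exact: qj_neq0.
  move: h; qunfold => -[/eqP + /eqP]; rewrite addr_eq0 addr0 => /eqP -> /eqP ->.
  congr (_, _); rewrite ?(conjcN, conjcM, nJ, conjc_i); ring.
exists (qadd (k1, k2) (qc (n * 'i%C))) => //.
move: hn; rewrite /qnorm /= k1J; qunfold => hn; congr (_, _); rewrite ?conjc0 ?k1J.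
  rewrite (_ : k2^*%C * (k2 + 0) = k1 * k1 + n * n); last by rewrite hn; ring.
  rewrite (_ : (k1 + n * 'i%C) * (n * 'i%C) = k1 * (n * 'i%C) + n * n * ('i%C * 'i%C)).
    by rewrite ii; ring.
  ring.
ring.
Qed.

Lemma pure_quat_conjugate (k : quat) :
  qpure k -> k != q0 ->
  exists q z, [/\ q != q0, z != 0, z^*%C = - z &
                  qcongr k q = qc z].
Proof.
move=> hk k0; set n := sqrtc (qnorm k).
have hn : n * n = qnorm k by rewrite -expr2 sqr_sqrtc.
have nJ : n^*%C = n.
  have : 0 <= n by rewrite sqrtc_ge0 qnorm_ge0.
  by rewrite /n; case: (sqrtc _) => x y /ger0_Im /= ->; rewrite oppr0.
have n0 : n != 0 by apply: contraNneq (qnorm_neq0 k0) => h; rewrite -hn h mul0r.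
have [q hq hkq] := pure_quat_eigen hk hn nJ.
exists q, (qnorm q * (n * 'i%C)); split.
- exact: hq.
- by rewrite !mulf_neq0 ?qnorm_neq0 ?i_neq0.
- by rewrite !conjcM conjc_qnorm nJ conjc_i; ring.
- by rewrite /qcongr hkq -qmulA qconjMq qcM.
Qed.

End PureQuaternions.

Section Frame.
Variable R : rcfType.
Local Notation C := R[i].
Local Notation quat := (quat R).
Local Notation vec := 'rV[C]_4.
Local Notation q0 := (q0 R).
Local Notation q1 := (q1 R).
Local Notation qj := (qj R).

Variables w0 w1 : vec.

Definition frame_circle (x : vec) : Prop :=
  samept w1 x \/ exists t : R, samept (w0 + (t%:C)%C *: w1) x.

Definition frame_plane (g g' : quat) : 'M[C]_(2, 4) := col2 (rmulH w0 g) (rmulH w1 g').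

Lemma frame_plane_scale g z :
  z != 0 -> (frame_plane (qmul g (qc z)) (qmul g (qc z)) == frame_plane g g)%MS.
Proof.
move=> hz; rewrite /frame_plane /col2 -!scaler_rmulH -scale_col_mx.
by apply/eqmxP; exact: eqmx_scale.
Qed.

Lemma jspan_frame_plane g : jspan (frame_plane g g) = frame_plane (qmul g qj) (qmul g qj).
Proof. by rewrite /jspan row0_col2 row1_col2 !jmap_rmulH. Qed.

Lemma omega_frame_plane g :
  omega (row 0 (frame_plane g g)) (row 1 (frame_plane g g)) = (qcongr (hform w0 w1) g).2.
Proof. by rewrite row0_col2 row1_col2 /omega hform_rmulH. Qed.

Hypothesis frame_free :
  forall g g', rmulH w0 g + rmulH w1 g' = 0 -> g = q0 /\ g' = q0.

Lemma frame_dir_neq0 : w1 != 0.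
Proof.
apply/eqP => h; have /frame_free[_ /eqP] : rmulH w0 q0 + rmulH w1 q1 = 0.
  by rewrite rmulH0 rmulH1 h add0r.
by rewrite (negbTE (q1_neq0 R)).
Qed.

Lemma frame_point_neq0 (t : R) : w0 + (t%:C)%C *: w1 != 0.
Proof.
apply/eqP => h; have /frame_free[/eqP + _] : rmulH w0 q1 + rmulH w1 (qc (t%:C)%C) = 0.
  by rewrite rmulH1 -scalerH.
by rewrite (negbTE (q1_neq0 R)).
Qed.

Lemma frame_origin_neq0 : w0 != 0.
Proof. by have := frame_point_neq0 0; rewrite rmorph0 scale0r addr0. Qed.

Lemma frame_circle_point (t : R) : frame_circle (w0 + (t%:C)%C *: w1).
Proof. by right; exists t; apply: samept_refl; exact: frame_point_neq0. Qed.

Lemma frame_circle_origin : frame_circle w0.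
Proof. by have := frame_circle_point 0; rewrite rmorph0 scale0r addr0. Qed.

Lemma frame_circle_sum : frame_circle (w0 + w1).
Proof. by have := frame_circle_point 1; rewrite rmorph1 scale1r. Qed.

Lemma frame_circle_dir : frame_circle w1.
Proof. by left; apply: samept_refl; exact: frame_dir_neq0. Qed.

Lemma frame_plane_rank g g' : g != q0 -> g' != q0 -> \rank (frame_plane g g') = 2%N.
Proof.
move=> hg hg'; apply: rank_col2 => a b; rewrite !scaler_rmulH => /frame_free[ha hb].
by split; [case: (qmul_eq0r hg ha) | case: (qmul_eq0r hg' hb)].
Qed.

(* [col_mx x (jmap x)] spans [x H], which cannot contain [w0 g] and [w1 g']. *)
Lemma frame_plane_notS3 g g' : g != q0 -> g' != q0 -> ~ isS3inQ3 (frame_plane g g').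
Proof.
move=> hg hg' [x [_ /andP[sWx _]]].
have /submx_col2P[a0 [b0]] := submx_trans (scale_sub_col2l _ _ 1) sWx.
have /submx_col2P[a1 [b1]] := submx_trans (scale_sub_col2r _ _ 1) sWx.
rewrite !scale1r !scale_jmapD => e1 e0.
have r0 : (a0, b0) != q0.
  apply: contra_neq frame_origin_neq0 => h.
  by apply/eqP; rewrite -(rmulH_eq0 _ hg) e0 h rmulH0.
have := @frame_free (qmul (qmul g (qinv (a0, b0))) (a1, b1)) (qneg g').
rewrite rmulHN -!rmulHA e0 (rmulHA x) qmulV // rmulH1 -e1 subrr.
by case=> // _ /qneg_eq0 /eqP; rewrite (negbTE hg').
Qed.

Lemma samept_onsphere (W : 'M[C]_(2, 4)) (y x : vec) g :
  g != q0 -> (rmulH y g <= W)%MS -> samept y x -> onsphere W x.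
Proof.
move=> hg hyW [hy [r [hr ->]]]; apply/onsphereP; split; first by rewrite rmulH_eq0.
by exists (qmul (qinv r) g); rewrite ?qmul_neq0 ?qinv_neq0 // rmulHA qmulKV.
Qed.

Lemma frame_circle_onsphere g x : g != q0 -> frame_circle x -> onsphere (frame_plane g g) x.
Proof.
move=> hg [hx | [t hx]]; apply: (samept_onsphere hg _ hx).
  by rewrite -[rmulH w1 g]scale1r scale_sub_col2r.
have -> : rmulH (w0 + (t%:C)%C *: w1) g = 1 *: rmulH w0 g + (t%:C)%C *: rmulH w1 g.
  by vec_ring.
by apply/submx_col2P; do 2 eexists.
Qed.

(* Expanding the lift of [w0 + w1] in the basis [w0 g0, w1 g1] forces
   [g2 = g0 a = g1 b] with [a, b] complex. *)
Lemma frame_plane_through (W : 'M[C]_(2, 4)) g0 g1 g2 :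
  inQ4 W -> g0 != q0 -> g1 != q0 -> g2 != q0 ->
  (rmulH w0 g0 <= W)%MS -> (rmulH w1 g1 <= W)%MS -> (rmulH (w0 + w1) g2 <= W)%MS ->
  (W == frame_plane g2 g2)%MS.
Proof.
move=> hW hg0 hg1 hg2 s0 s1 s2.
have /andP[_ sW01] := eqmx_rank2 (col2_sub s0 s1) (frame_plane_rank hg0 hg1) hW.
have /submx_col2P[a [b E]] := submx_trans s2 sW01.
have := @frame_free (qadd g2 (qneg (qmul g0 (qc a)))) (qadd g2 (qneg (qmul g1 (qc b)))).
rewrite !rmulHDr !rmulHN -!scaler_rmulH addrACA -opprD -rmulHDl E subrr.
case=> // /qsub_eq0 E0 /qsub_eq0 E1.
have s201 : (frame_plane g2 g2 <= frame_plane g0 g1)%MS.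
  apply: col2_sub; [rewrite E0 | rewrite E1]; rewrite -scaler_rmulH.
    exact: scale_sub_col2l.
  exact: scale_sub_col2r.
have /andP[_ s012] := eqmx_rank2 s201 (frame_plane_rank hg2 hg2) (frame_plane_rank hg0 hg1).
exact: eqmx_rank2 (submx_trans sW01 s012) hW (frame_plane_rank hg2 hg2).
Qed.

(* With [g = q r], the hypothesis reads [r.1 * r.2 = 0]: [r] is complex or in [jC]. *)
Lemma frame_plane_isotropic q z g :
  q != q0 -> z != 0 -> z^*%C = - z -> qcongr (hform w0 w1) q = qc z ->
  g != q0 -> (qcongr (hform w0 w1) g).2 = 0 ->
  (frame_plane g g == frame_plane q q)%MS \/
  (frame_plane g g == frame_plane (qmul q qj) (qmul q qj))%MS.
Proof.
move=> hq hz hzJ hqz hg hom.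
have [[r1 r2] gE] : exists r, g = qmul q r by exists (qmul (qinv q) g); rewrite qmulKV.
rewrite gE qcongrM hqz qcongr_imag_snd //= in hom.
have r_neq0 : (r1, r2) != q0 by apply: contra_neq hg => h; rewrite gE h qmulq0.
move/eqP: hom; rewrite oppr_eq0 !mulf_eq0 pnatr_eq0 (negbTE hz) /=.
case/orP=> /eqP r0; [right | left].
  have -> : g = qmul (qmul q qj) (qc r2) by rewrite gE qmulA qjc r0.
  apply: frame_plane_scale; apply: contra_neq r_neq0 => r20; by rewrite r0 r20.
have -> : g = qmul q (qc r1) by rewrite gE r0.
by apply: frame_plane_scale; apply: contra_neq r_neq0 => r10; rewrite r0 r10.
Qed.

Lemma frame_plane_Q3mS3 g :
  g != q0 -> (qcongr (hform w0 w1) g).2 = 0 -> inQ3mS3 (frame_plane g g).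
Proof.
move=> hg hom; split; last exact: frame_plane_notS3.
by split; [exact: frame_plane_rank | rewrite omega_frame_plane].
Qed.

Lemma sphere_frame_plane (W : 'M[C]_(2, 4)) :
  inQ3 W -> (forall x, frame_circle x -> onsphere W x) ->
  exists2 g, g != q0 & (W == frame_plane g g)%MS /\ (qcongr (hform w0 w1) g).2 = 0.
Proof.
move=> hW hsph.
have lift x : frame_circle x -> exists2 g, g != q0 & (rmulH x g <= W)%MS.
  by move=> /hsph /onsphereP[].
have [g0 hg0 s0] := lift _ frame_circle_origin.
have [g1 hg1 s1] := lift _ frame_circle_dir.
have [g2 hg2 s2] := lift _ frame_circle_sum.
have eW := frame_plane_through hW.1 hg0 hg1 hg2 s0 s1 s2.
exists g2 => //; split=> //; rewrite -omega_frame_plane.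
have /andP[_ s2W] := eW.
by apply: omega_Q3 hW _ _; apply: submx_trans s2W; exact: row_sub.
Qed.

Lemma null_frame_hform_neq0 :
  (forall y, exists g g', y = rmulH w0 g + rmulH w1 g') -> hform w0 w0 = q0 ->
  hform w0 w1 != q0.
Proof.
move=> span h00; apply: contra_neq frame_origin_neq0 => h01.
apply: hform_nondegenerate => y; have [g [g' ->]] := span y.
by rewrite hformDr !hform_rmulHr h00 h01 !qmul0q qadd0q.
Qed.

Hypothesis frame_pure : qpure (hform w0 w1).
Hypothesis frame_nondeg : hform w0 w1 != q0.

Lemma frame_sphere_unique :
  exists W : 'M[C]_(2, 4),
    inQ3mS3 W /\ inQ3mS3 (jspan W) /\
    (forall x, frame_circle x -> onsphere W x) /\
    (forall W' : 'M[C]_(2, 4), inQ3mS3 W' ->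
       (forall x, frame_circle x -> onsphere W' x) ->
       (W' == W)%MS \/ (W' == jspan W)%MS).
Proof.
have [q [z [hq hz hzJ hqz]]] := pure_quat_conjugate frame_pure frame_nondeg.
exists (frame_plane q q); rewrite jspan_frame_plane; split; [|split; [|split]].
- by apply: frame_plane_Q3mS3; rewrite // hqz.
- apply: frame_plane_Q3mS3; first by rewrite qmul_neq0 ?qj_neq0.
  by rewrite qcongrM hqz /qcongr; quat_ring.
- by move=> x; exact: frame_circle_onsphere.
move=> W' [hW' _] /(sphere_frame_plane hW')[g hg [/eqmxP eW' hom]].
by case: (frame_plane_isotropic hq hz hzJ hqz hg hom) => /eqmxP h; [left | right];
  apply/eqmxP; exact: eqmx_trans eW' h.
Qed.

End Frame.

Section MoebiusCircle.
Variable R : rcfType.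
Local Notation C := R[i].
Local Notation quat := (quat R).
Local Notation vec := 'rV[C]_4.
Local Notation q0 := (q0 R).
Local Notation q1 := (q1 R).

Variables a b c d p u : quat.

Definition circle_origin : vec := mob a b c d (mkH2 p q1).
Definition circle_dir : vec := rmulH (mob a b c d (mkH2 q1 q0)) u.

Lemma circle_frameE g g' :
  rmulH circle_origin g + rmulH circle_dir g' =
  mob a b c d (mkH2 (qadd (qmul p g) (qmul u g')) g).
Proof.
rewrite /circle_dir rmulHA /circle_origin -!mob_rmulH -mobD.
by congr (mob _ _ _ _ _); vec_ring.
Qed.

Lemma circle_pointE (t : R) :
  mob a b c d (mkH2 (qadd p (qmul (qreal t) u)) q1) = circle_origin + (t%:C)%C *: circle_dir.
Proof.
rewrite scalerH -[circle_origin]rmulH1 circle_frameE.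
by congr (mob _ _ _ _ _); vec_ring.
Qed.

Hypothesis mob_inv : mob_invertible a b c d.
Hypothesis u_neq0 : u != q0.

Lemma circle_frame_free g g' :
  rmulH circle_origin g + rmulH circle_dir g' = 0 -> g = q0 /\ g' = q0.
Proof.
have [a' [b' [c' [d' [mobK _]]]]] := mob_inv.
rewrite circle_frameE => /(congr1 (mob a' b' c' d')); rewrite mobK mob0 => h.
have := congr1 (@comp1 R) h; have := congr1 (@comp2 R) h; rewrite !compE => -> /=.
by rewrite qmulq0 qadd0q => /(qmul_eq0r u_neq0).
Qed.

Lemma circle_frame_span y :
  exists g g', y = rmulH circle_origin g + rmulH circle_dir g'.
Proof.
have [a' [b' [c' [d' [_ mobK]]]]] := mob_inv.
set z := mob a' b' c' d' y.
exists (comp2 z), (qmul (qinv u) (qadd (comp1 z) (qneg (qmul p (comp2 z))))).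
by rewrite circle_frameE qmulKV // qaddKN mkH2_comp mobK.
Qed.

Lemma oncircleE x : oncircle a b c d p u x <-> frame_circle circle_origin circle_dir x.
Proof.
rewrite /oncircle /frame_circle /circle_dir samept_rmulH //.
split=> -[h | [t h]]; [by left | right | by left | right]; exists t.
  by rewrite -circle_pointE.
by rewrite circle_pointE.
Qed.

End MoebiusCircle.

Theorem mainTheorem9 (R : realType) (a b c d p u : quat R) :
  mob_invertible a b c d -> u != q0 R ->
  (forall x, oncircle a b c d p u x -> inS3pt x) ->
  exists W : 'M[R[i]]_(2, 4),
    inQ3mS3 W /\ inQ3mS3 (jspan W) /\
    (forall x, oncircle a b c d p u x -> onsphere W x) /\
    (forall W' : 'M[R[i]]_(2, 4), inQ3mS3 W' ->
       (forall x, oncircle a b c d p u x -> onsphere W' x) ->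
       (W' == W)%MS \/ (W' == jspan W)%MS).
Proof.
move=> hinv hu hS3.
have free := circle_frame_free (p := p) hinv hu.
have circ := oncircleE a b c d p hu.
have isotropic x : frame_circle (circle_origin a b c d p) (circle_dir a b c d u) x ->
    hform x x = q0 R.
  by move=> /circ /hS3[].
have h00 := isotropic _ (frame_circle_origin free).
have pure := hform_isotropic_pure h00 (isotropic _ (frame_circle_dir free))
  (isotropic _ (frame_circle_sum free)).
have nondeg := null_frame_hform_neq0 free (circle_frame_span p hinv hu) h00.
have [W [hW [hJ [hsph huniq]]]] := frame_sphere_unique free pure nondeg.
exists W; do 2 split=> //; split=> [x /circ | W' hW' hsph']; first exact: hsph.
by apply: huniq => // x /circ; exact: hsph'.
Qed.
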